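(* Fix $\vartheta>0$ and let $D_n^{(\vartheta)}$ be the depth of the $n$-th inserted node in a Hoppe tree with parameter $\vartheta$. Then for all $n\geq 2$ $$D_n^{(\vartheta)}\stackrel{d}{=} 1 + \sum_{i=1}^{n-2} B_{i},$$ where $B_1,\ldots,B_{n-2}$ are independent random variables with $\mathbb{P}(B_i=1)=1-\mathbb{P}(B_i=0)= \frac{1}{\vartheta+i}$ for $i=1,\ldots,n-2$.
   Context: Hoppe tree with parameter $\vartheta>0$: the tree is grown by successive insertion of nodes, labelled $1,2,3,\ldots$ in order of insertion. Initially there is only the root (node $1$). In each step a parent node is chosen among the existing nodes, independently of the past, with probability proportional to its weight, where the root has weight $\vartheta$ and every other node has weight $1$; a new node is attached as a child of the chosen node. The Hoppe tree with $n$ nodes is the tree after $n-1$ insertions. The depth of a node is its distance (number of edges) to the root. *)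

From HB Require Import structures.
From mathcomp Require Import all_boot all_order all_algebra.
From mathcomp Require Import reals.
Set Implicit Arguments. Unset Strict Implicit. Unset Printing Implicit Defensive.
Import Order.TTheory GRing.Theory Num.Theory.
Local Open Scope ring_scope.

(* Hoppe tree with n nodes, encoded by its parent function.
   Nodes are 0-indexed: index k : 'I_n stands for the node labelled k+1
   (the root, label 1, is index 0).  A parent function f : {ffun 'I_n -> 'I_n}
   sends every non-root node k to its parent f k; the root is sent to itself. *)

(* Probability that, when inserting node index k (k >= 1), its parent is j:
   existing nodes are indices 0..k-1, total weight theta + (k-1). *)
Definition hoppe_weight (R : realType) (theta : R) (n : nat) (k j : 'I_n) : R :=
  if val k == 0%N then (if val j == 0%N then 1 else 0)
  else if (val j < val k)%N then
         (if val j == 0%N then theta else 1) / (theta + (val k).-1%:R)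
       else 0.

Definition hoppe_prob (R : realType) (theta : R) (n : nat)
    (f : {ffun 'I_n -> 'I_n}) : R :=
  \prod_(k : 'I_n) hoppe_weight theta k (f k).

Definition par_nat (n : nat) (f : {ffun 'I_n -> 'I_n}) (i : nat) : nat :=
  if (insub i : option 'I_n) is Some o then val (f o) else 0%N.

Fixpoint depth_fuel (par : nat -> nat) (fuel i : nat) : nat :=
  match fuel with
  | 0 => 0
  | m.+1 => if i == 0%N then 0 else (depth_fuel par m (par i)).+1
  end.

(* Depth of node index i in the tree f (fuel n suffices since parents
   have strictly smaller indices). *)
Definition depth (n : nat) (f : {ffun 'I_n -> 'I_n}) (i : nat) : nat :=
  depth_fuel (par_nat f) n i.

(* P(D_n = d): law of the depth of the n-th inserted node (index n-1)
   in the Hoppe tree with n nodes. *)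
Definition hoppe_depth_law (R : realType) (theta : R) (n d : nat) : R :=
  \sum_(f : {ffun 'I_n -> 'I_n})
     (if depth f n.-1 == d then hoppe_prob theta f else 0).

(* P(1 + B_1 + ... + B_{n-2} = d) for independent Bernoulli B_i with
   P(B_i = 1) = 1/(theta+i); b i (i : 'I_(n-2), 0-based) is the value of B_{i+1}. *)
Definition bernoulli_prob (R : realType) (theta : R) (m : nat)
    (b : {ffun 'I_m -> bool}) : R :=
  \prod_(i : 'I_m)
     (if b i then 1 / (theta + (val i).+1%:R) else 1 - 1 / (theta + (val i).+1%:R)).

Definition bernoulli_sum_law (R : realType) (theta : R) (n d : nat) : R :=
  \sum_(b : {ffun 'I_(n - 2) -> bool})
     (if (1 + \sum_(i < n - 2) (b i : nat))%N == d
      then bernoulli_prob theta b else 0).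

From HB Require Import structures.
From mathcomp Require Import all_boot all_order all_algebra.
From mathcomp Require Import fingroup perm.
From mathcomp Require Import reals.
Set Implicit Arguments. Unset Strict Implicit. Unset Printing Implicit Defensive.
Import Order.TTheory GRing.Theory Num.Theory.
Local Open Scope ring_scope.

(* Both laws satisfy the same recursion.  Node k >= 1 attaches to the root with
   probability theta/(theta+k-1) and to each node 1..k-1 with probability
   1/(theta+k-1), independently of the rest of the tree, so
     P(D_{k+1} = d+1) = (theta [d = 0] + sum_(j < k-1) P(D_{j+2} = d)) / (theta+k-1).
   On the other side, the generating polynomial
   Q_m = prod_(i < m) (1 - p_i + p_i X), p_i = 1/(theta+i+1), of B_1 + ... + B_m
   satisfies (theta + m) Q_m = theta + X (Q_0 + ... + Q_(m-1)), so by strong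
   induction P(D_(m+2) = d+1) is the coefficient of X^d in Q_m. *)

Section ProductWeight.

Variables (R : comNzRingType) (I J : finType) (w : I -> J -> R).

Definition prod_weight (f : {ffun I -> J}) : R := \prod_k w k (f k).

Lemma sum_prod_weight :
  (forall i, \sum_j w i j = 1) -> \sum_(f : {ffun I -> J}) prod_weight f = 1.
Proof. by move=> w1; rewrite -bigA_distr_bigA big1. Qed.

(* Swapping the values x and y of coordinate i is a bijection between
   {f | f i = x} and {f | f i = y} preserving the weights of the other
   coordinates. *)
Lemma sum_prod_weight_coord (i : I) (j : J) (G : {ffun I -> J} -> R) :
  \sum_j w i j = 1 ->
  (forall f g : {ffun I -> J}, (forall k, k != i -> f k = g k) -> G f = G g) ->
  \sum_(f : {ffun I -> J} | f i == j) prod_weight f * G f =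
  w i j * \sum_(f : {ffun I -> J}) prod_weight f * G f.
Proof.
move=> w_i1 G_local.
pose H (f : {ffun I -> J}) := \prod_(k | k != i) w k (f k) * G f.
have prod_weight_split (f : {ffun I -> J}) :
    prod_weight f * G f = w i (f i) * H f.
  by rewrite /prod_weight (bigD1 i) //= mulrA.
have H_fiber x y : \sum_(f : {ffun I -> J} | f i == x) H f
                 = \sum_(f : {ffun I -> J} | f i == y) H f.
  pose s (f : {ffun I -> J}) :=
    [ffun k => if k == i then tperm x y (f k) else f k].
  have sK : involutive s.
    by move=> f; apply/ffunP=> k; rewrite !ffunE; case: eqP => // _; rewrite tpermK.
  rewrite (reindex_inj (inv_inj sK)) /=; apply: eq_big => f.
    by rewrite ffunE eqxx -[X in _ == X](tpermR x y) (inj_eq perm_inj).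
  move=> _; rewrite /H; congr (_ * _).
    by apply: eq_bigr => k ki; rewrite ffunE (negbTE ki).
  by apply: G_local => k ki; rewrite ffunE (negbTE ki).
transitivity (\sum_(f : {ffun I -> J} | f i == j) w i j * H f).
  by apply: eq_bigr => f /eqP fi; rewrite prod_weight_split fi.
rewrite -big_distrr /=; congr (_ * _).
rewrite [RHS](eq_bigr _ (fun f _ => prod_weight_split f)).
rewrite [RHS](partition_big (fun f : {ffun I -> J} => f i) xpredT) //=.
transitivity (\sum_x w i x * \sum_(f : {ffun I -> J} | f i == j) H f).
  by rewrite -big_distrl /= w_i1 mul1r.
apply: eq_bigr => x _; rewrite (H_fiber j x) big_distrr /=.
by apply: eq_big => // f /eqP ->.
Qed.

End ProductWeight.

Lemma eq_depth_fuel (par par' : nat -> nat) :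
  par =1 par' -> forall fuel i, depth_fuel par fuel i = depth_fuel par' fuel i.
Proof. by move=> par_eq; elim=> [|m IH] i //=; rewrite par_eq IH. Qed.

Section DecreasingParent.

Variable par : nat -> nat.
Hypothesis par_lt : forall k, (0 < k)%N -> (par k < k)%N.

Lemma depth_fuel_local (par' : nat -> nat) fuel j :
  (forall k, (0 < k <= j)%N -> par k = par' k) ->
  depth_fuel par fuel j = depth_fuel par' fuel j.
Proof.
elim: fuel j => [|m IH] j par_eq //=.
have [//|j_gt0] := posnP j.
rewrite -par_eq ?j_gt0 ?leqnn // IH // => k /andP [k_gt0 kj]; apply: par_eq.
by rewrite k_gt0 (leq_trans kj) // ltnW // par_lt.
Qed.

Lemma depth_fuel_enough fuel fuel' j :
  (j < fuel)%N -> (j < fuel')%N ->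
  depth_fuel par fuel j = depth_fuel par fuel' j.
Proof.
elim: fuel fuel' j => [|m IH] [|m'] j //= lt_jm lt_jm'.
have [//|j_gt0] := posnP j.
by rewrite (IH m') // (leq_trans (par_lt j_gt0)).
Qed.

End DecreasingParent.

(* The parent map of [depth] need not decrease off the support of the tree
   measure; [sparent] forces it to, and agrees with it on the support. *)
Definition sparent (n : nat) (f : {ffun 'I_n -> 'I_n}) (k : nat) : nat :=
  if (par_nat f k < k)%N then par_nat f k else 0%N.

Definition sdepth (n : nat) (f : {ffun 'I_n -> 'I_n}) (i : nat) : nat :=
  depth_fuel (sparent f) n i.

Lemma sparent_lt n (f : {ffun 'I_n -> 'I_n}) k :
  (0 < k)%N -> (sparent f k < k)%N.
Proof. by rewrite /sparent; case: ifP. Qed.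

Lemma sdepth0 n (f : {ffun 'I_n -> 'I_n}) : sdepth f 0 = 0%N.
Proof. by rewrite /sdepth; case: n f. Qed.

Lemma sdepthS n (f : {ffun 'I_n -> 'I_n}) i :
  (0 < i < n)%N -> sdepth f i = (sdepth f (sparent f i)).+1.
Proof.
case/andP=> i_gt0 lt_in; rewrite /sdepth.
case: n f lt_in => [|n'] g lt_in //.
have lt_pi := sparent_lt g i_gt0.
rewrite [LHS]/= (negbTE (lt0n_neq0 i_gt0)); congr _.+1.
apply: depth_fuel_enough; first exact: sparent_lt.
  exact: leq_trans lt_pi _.
by rewrite (leq_trans lt_pi) // ltnW.
Qed.

Lemma sdepth_local n (f g : {ffun 'I_n -> 'I_n}) (i : 'I_n) j :
  (forall k, k != i -> f k = g k) -> (j < i)%N -> sdepth f j = sdepth g j.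
Proof.
move=> fg lt_ji.
apply: depth_fuel_local => [k|k /andP [_ kj]]; first exact: sparent_lt.
rewrite /sparent /par_nat; case: insubP => [o _ ok|] //.
rewrite fg //; apply: contraTneq kj => oi.
by rewrite -ltnNge -ok oi.
Qed.

Section HoppeWeights.

Variables (R : realType) (theta : R).
Hypothesis theta_gt0 : 0 < theta.

Lemma theta_addn_neq0 m : theta + m%:R != 0.
Proof. by rewrite gt_eqF // ltr_wpDr. Qed.

Lemma hoppe_weight_support n (k j : 'I_n) : hoppe_weight theta k j != 0 ->
  (val k = 0%N -> val j = 0%N) /\ ((0 < k)%N -> (j < k)%N).
Proof.
rewrite /hoppe_weight => w_neq0; split=> [k0|k_gt0]; move: w_neq0.
  by rewrite k0 eqxx; case: (val j =P 0%N) => // _; rewrite eqxx.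
by rewrite (negbTE (lt0n_neq0 k_gt0)); case: ifP => // _; rewrite eqxx.
Qed.

Lemma hoppe_weight_sum_nat n (i : 'I_n) m (F : nat -> R) : val i = m.+1 ->
  \sum_(x : 'I_n) hoppe_weight theta i x * F x
  = (theta * F 0%N + \sum_(x < m) F x.+1) / (theta + m%:R).
Proof.
move=> im.
pose a x := if x == 0%N then theta else 1.
rewrite (eq_bigr (fun x : 'I_n =>
  (if (val x < m.+1)%N then a x * F x else 0) / (theta + m%:R))); last first.
  by move=> x _; rewrite /hoppe_weight im /=; case: ifP; rewrite ?mul0r // mulrAC.
rewrite -big_distrl /=; congr (_ / _).
rewrite -(big_mkord xpredT (fun x => if (x < m.+1)%N then a x * F x else 0)).
rewrite (big_cat_nat _ (n := m.+1)) //=; last by rewrite -im (ltnW (ltn_ord i)).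
rewrite [X in _ + X](_ : _ = 0) ?addr0; last first.
  by rewrite big_nat_cond big1 // => x /andP [/andP [hx _] _]; rewrite ltnNge hx.
rewrite big_nat_recl // ltnS leq0n /a eqxx big_mkord; congr (_ + _).
by apply: eq_bigr => x _; rewrite ltnS ltn_ord mul1r.
Qed.

Lemma hoppe_weight_sum n (k : 'I_n) : \sum_j hoppe_weight theta k j = 1.
Proof.
case ek: (val k) => [|m].
  rewrite (bigD1 (Ordinal (leq_ltn_trans (leq0n k) (ltn_ord k)))) //=.
  rewrite /hoppe_weight ek eqxx big1 ?addr0 // => j j0.
  by rewrite ifN //; apply: contraNneq j0 => j0; apply/eqP/val_inj.
rewrite -[RHS](divff (theta_addn_neq0 m)) -[RHS]mul1r.
have := hoppe_weight_sum_nat (fun _ => 1) ek.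
under eq_bigr do rewrite mulr1.
by move=> ->; rewrite sumr_const card_ord mulr1 mul1r -mulr_natr mul1r.
Qed.

End HoppeWeights.

Section BernoulliGenerating.

Variables (R : realType) (theta : R).
Hypothesis theta_gt0 : 0 < theta.

Definition bern_param (i : nat) : R := 1 / (theta + i.+1%:R).

Definition bern_gen (m : nat) : {poly R} :=
  \prod_(i < m) ((1 - bern_param i)%:P + (bern_param i)%:P * 'X).

Lemma coef_bern_gen m k : (bern_gen m)`_k =
  \sum_(b : {ffun 'I_m -> bool} | (\sum_(i < m) (b i : nat) == k)%N)
    bernoulli_prob theta b.
Proof.
have -> : bern_gen m = \prod_(i < m) \sum_(x : bool)
    (if x then (bern_param i)%:P * 'X else (1 - bern_param i)%:P).
  apply: eq_bigr => i _.
  by rewrite (bigD1 true) //= (big_pred1 false); [rewrite addrC | case].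
rewrite bigA_distr_bigA /= (eq_bigr (fun b : {ffun 'I_m -> bool} =>
  bernoulli_prob theta b *: 'X^(\sum_(i < m) (b i : nat)))) ?coef_sumMXn // => b _.
rewrite -prodrXr -mul_polyC rmorph_prod -big_split /=.
by apply: eq_bigr => i _; case: (b i); rewrite /= ?expr1 ?expr0 ?mulr1.
Qed.

Lemma bernoulli_sum_lawE n d :
  bernoulli_sum_law theta n d = if d is d'.+1 then (bern_gen (n - 2))`_d' else 0.
Proof.
rewrite /bernoulli_sum_law; case: d => [|d].
  by rewrite big1 // => b _; rewrite add1n.
rewrite coef_bern_gen [RHS]big_mkcond.
by apply: eq_bigr => b _; rewrite add1n eqSS.
Qed.

(* Multiplying Q_(m+1) = Q_m (1 - p_m + p_m X) by theta + m + 1 gives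
   (theta + m) Q_m + X Q_m, which telescopes. *)
Lemma bern_gen_rec m :
  (theta + m%:R)%:P * bern_gen m = theta%:P + \sum_(j < m) 'X * bern_gen j.
Proof.
elim: m => [|m IH]; first by rewrite /bern_gen !big_ord0 !addr0 mulr1.
rewrite big_ord_recr /= addrA -IH {1}/bern_gen big_ord_recr /= -/(bern_gen m).
have ne := theta_addn_neq0 theta_gt0 m.+1.
have e1 : (theta + m.+1%:R) * (1 - bern_param m) = theta + m%:R.
  by rewrite /bern_param mulrBr mulr1 mul1r mulfV // -natr1 addrA addrK.
have e2 : (theta + m.+1%:R)%:P * ((bern_param m)%:P * 'X) = 'X.
  by rewrite mulrA -polyCM /bern_param mul1r mulfV // mul1r.
rewrite mulrCA mulrDr -polyCM e1 e2 mulrDr.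
by rewrite [bern_gen m * _%:P]mulrC [bern_gen m * 'X]mulrC.
Qed.

Lemma coef_bern_gen_rec m d :
  (bern_gen m)`_d = (theta * (d == 0%N)%:R +
     \sum_(j < m) (if d is d'.+1 then (bern_gen j)`_d' else 0)) / (theta + m%:R).
Proof.
have ne := theta_addn_neq0 theta_gt0 m.
have := congr1 (fun p : {poly R} => p`_d) (bern_gen_rec m).
rewrite /= coefCM coefD coefC coef_sum => h.
rewrite -[LHS](mulKf ne) h mulrC; congr (_ / _); congr (_ + _).
  by case: d {h} => [|d]; rewrite ?mulr1 ?mulr0.
by apply: eq_bigr => j _; rewrite coefXM; case: d {h}.
Qed.

End BernoulliGenerating.

Section DepthLaw.

Variables (R : realType) (theta : R) (n : nat).
Hypothesis theta_gt0 : 0 < theta.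

Lemma hoppe_prob_sum : \sum_(f : {ffun 'I_n -> 'I_n}) hoppe_prob theta f = 1.
Proof.
by apply: (@sum_prod_weight _ _ _ (@hoppe_weight R theta n)) => i;
  apply: hoppe_weight_sum.
Qed.

Lemma depth_sdepth (f : {ffun 'I_n -> 'I_n}) i :
  hoppe_prob theta f != 0 -> depth f i = sdepth f i.
Proof.
move=> /prodf_neq0 f_supp; apply: eq_depth_fuel => k.
rewrite /sparent /par_nat; case: insubP => [o _ ok|_]; last by case: ifP.
have [root_fixed par_lt] := hoppe_weight_support (f_supp o isT).
have [k0|k_gt0] := posnP k; last by rewrite -ok par_lt ?ok.
by rewrite k0 ltn0 root_fixed // ok.
Qed.

Definition sdepth_law (i d : nat) : R :=
  \sum_(f : {ffun 'I_n -> 'I_n}) hoppe_prob theta f * (sdepth f i == d)%:R.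

Lemma sdepth_law0 d : sdepth_law 0 d = (d == 0%N)%:R.
Proof.
rewrite /sdepth_law; under eq_bigr => f _ do rewrite sdepth0.
by rewrite -big_distrl /= hoppe_prob_sum mul1r eq_sym.
Qed.

Lemma sdepth_law_nonroot0 i : (0 < i < n)%N -> sdepth_law i 0 = 0.
Proof.
by move=> i_in; rewrite /sdepth_law big1 // => f _; rewrite sdepthS // mulr0.
Qed.

(* Condition on the parent x of node i: the depth of x does not involve the
   choice made at i, which is independent of the rest of the tree. *)
Lemma sdepth_lawS (i : 'I_n) d : (0 < i)%N ->
  sdepth_law i d.+1 = \sum_(x : 'I_n) hoppe_weight theta i x * sdepth_law x d.
Proof.
move=> i_gt0; rewrite /sdepth_law.
under eq_bigr => f _ do rewrite sdepthS ?i_gt0 ?ltn_ord // eqSS.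
rewrite (partition_big (fun f : {ffun 'I_n -> 'I_n} => f i) xpredT) //=.
apply: eq_bigr => x _.
have [lt_xi|ge_xi] := ltnP x i; last first.
  rewrite /hoppe_weight (negbTE (lt0n_neq0 i_gt0)) ltnNge ge_xi mul0r.
  by rewrite big1 // => f /eqP fx; rewrite /hoppe_prob (bigD1 i) //= fx
    /hoppe_weight (negbTE (lt0n_neq0 i_gt0)) ltnNge ge_xi !mul0r.
transitivity (\sum_(f : {ffun 'I_n -> 'I_n} | f i == x)
    prod_weight (@hoppe_weight R theta n) f * (sdepth f x == d)%:R).
  by apply: eq_bigr => f /eqP fx; rewrite /sparent /par_nat valK fx lt_xi.
rewrite sum_prod_weight_coord //; first exact: hoppe_weight_sum.
by move=> f g fg; rewrite (sdepth_local fg lt_xi).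
Qed.

Lemma sdepth_law_coef_bern_gen m d : (m.+1 < n)%N ->
  sdepth_law m.+1 d = if d is d'.+1 then (bern_gen theta m)`_d' else 0.
Proof.
elim/ltn_ind: m d => m IH [|d] lt_mn; first by rewrite sdepth_law_nonroot0.
rewrite -[m.+1]/(val (Ordinal lt_mn)) sdepth_lawS //.
rewrite (hoppe_weight_sum_nat theta (m := m) (fun x => sdepth_law x d)) //.
rewrite coef_bern_gen_rec // sdepth_law0; congr ((_ + _) / _).
by apply: eq_bigr => j _; rewrite IH // (ltn_trans _ lt_mn) // ltnS.
Qed.

Lemma hoppe_depth_lawE d : hoppe_depth_law theta n d = sdepth_law n.-1 d.
Proof.
apply: eq_bigr => f _.
have [->|f_supp] := eqVneq (hoppe_prob theta f) 0.
  by rewrite mul0r if_same.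
by rewrite (depth_sdepth _ f_supp); case: eqP; rewrite ?mulr1 ?mulr0.
Qed.

End DepthLaw.

Theorem theorem2p1 (R : realType) (theta : R) (n : nat) :
  0 < theta -> (2 <= n)%N ->
  forall d : nat, hoppe_depth_law theta n d = bernoulli_sum_law theta n d.
Proof.
move=> theta_gt0 n_ge2 d.
have n_pred : n.-1 = (n - 2).+1 by case: n n_ge2 => [|[|n']] // _; rewrite subn2.
rewrite hoppe_depth_lawE bernoulli_sum_lawE n_pred sdepth_law_coef_bern_gen //.
by rewrite -n_pred prednK // (leq_trans _ n_ge2).
Qed.
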